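(* Let $d\ge1$ and let $P$ be a probability distribution on $\{0,1\}^d$ with $P(\nu)>0$ for all $\nu\in\{0,1\}^d$. For each $\omega\in\{0,1\}^d$, let $A_\omega$ be the $(2^d-1)\times d$ matrix with rows indexed by $\nu\in\{0,1\}^d\setminus\{\omega\}$ and entries $A_\omega(\nu,i)=1$ if $\nu_i\ne\omega_i$ and $0$ otherwise, let $b_\omega(\nu)=\ln(P(\nu)/P(\omega))$, let $\mathcal{Q}_\omega:=\{y\in\mathbb{R}^d\mid A_\omega y\le b_\omega\}$, and let $f_\omega(y):=\prod_{i=1}^d(1+e^{y_i})$. Then for each $\omega\in\{0,1\}^d$, the maximum $\max_{y\in\mathcal{Q}_\omega}f_\omega(y)$ can only be attained at a vertex of $\mathcal{Q}_\omega$.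
   Context: A vertex of $\mathcal{Q}_\omega$ is a point $y\in\mathcal{Q}_\omega$ such that $A'_\omega y=b'_\omega$ for some invertible $d\times d$ submatrix $A'_\omega$ of $A_\omega$ consisting of $d$ of its rows, with $b'_\omega$ the corresponding entries of $b_\omega$. (Via $y_i=(1-2\omega_i)\ln(q_i/(1-q_i))$, this polyhedron is the image of $\{q\in(0,1)^d: P(\omega)f_\omega(q)\le P(\nu)f_\nu(q)\ \forall\nu\}$, where $f_\omega(q)=\prod_i q_i^{-\omega_i}(1-q_i)^{\omega_i-1}$.) *)

From mathcomp Require Import all_boot all_order all_algebra.
From mathcomp Require Import all_classical all_reals all_analysis.
Set Implicit Arguments. Unset Strict Implicit. Unset Printing Implicit Defensive.
Import Order.TTheory GRing.Theory Num.Theory.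
Local Open Scope ring_scope.

(* {0,1}^d is represented by {ffun 'I_d -> bool}; nu i = true means nu_i = 1. *)
Notation cube d := {ffun 'I_d -> bool}.

Section Defs.
Variables (R : realType) (d : nat).

Definition full_support_prob (P : cube d -> R) : Prop :=
  (forall nu, 0 < P nu) /\ \sum_(nu : cube d) P nu = 1.

Definition A_ent (omega nu : cube d) (i : 'I_d) : R :=
  if nu i != omega i then 1 else 0.

Definition b_ent (P : cube d -> R) (omega nu : cube d) : R :=
  ln (P nu / P omega).

Definition A_row_y (omega nu : cube d) (y : 'cV[R]_d) : R :=
  \sum_(i < d) A_ent omega nu i * y i 0.

Definition Qpoly (P : cube d -> R) (omega : cube d) : set 'cV[R]_d :=
  [set y | forall nu, nu != omega -> A_row_y omega nu y <= b_ent P omega nu].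

Definition f_obj (y : 'cV[R]_d) : R := \prod_(i < d) (1 + expR (y i 0)).

Definition is_vertex (P : cube d -> R) (omega : cube d) (y : 'cV[R]_d) : Prop :=
  Qpoly P omega y /\
  exists s : 'I_d -> cube d,
    [/\ injective s, (forall k, s k != omega),
        (\matrix_(k < d, i < d) A_ent omega (s k) i) \in unitmx &
        forall k, A_row_y omega (s k) y = b_ent P omega (s k)].

End Defs.

From mathcomp Require Import all_boot all_order all_algebra.
From mathcomp Require Import all_classical all_reals all_analysis.
From mathcomp Require Import lra.
Set Implicit Arguments. Unset Strict Implicit. Unset Printing Implicit Defensive.
Import Order.TTheory GRing.Theory Num.Theory.
Import numFieldNormedType.Exports.
Local Open Scope classical_set_scope.
Local Open Scope ring_scope.

(* If a maximiser y of f_omega over Q_omega were not a vertex, the rows of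
   A_omega active at y would not span R^d, so some v <> 0 is orthogonal to all
   of them and y + t v, y - t v stay in Q_omega for small t <> 0.  But f_omega
   is strictly log-convex along every line: coordinatewise
   (1 + e^(a+s)) (1 + e^(a-s)) - (1 + e^a)^2 = e^a (e^s + e^-s - 2) > 0 for
   s <> 0, hence f(y + t v) f(y - t v) > f(y)^2 and y is not a maximiser. *)

Section RowsOrKernel.
Variables (F : fieldType) (n : nat).

Lemma unitmx_row_neq0 (M : 'M[F]_n) k : M \in unitmx -> row k M != 0.
Proof.
rewrite unitmxE unitfE; apply: contraNneq => /rowP Mk0.
rewrite (expand_det_row _ k) big1 // => j _.
by have := Mk0 j; rewrite !mxE => ->; rewrite mul0r.
Qed.

Lemma rows_unitmx_or_kernel (I : finType) (T : pred I) (a : I -> 'rV[F]_n) :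
  (exists s : 'I_n -> I,
     [/\ injective s, forall k, T (s k) & \matrix_k a (s k) \in unitmx]) \/
  (exists2 v : 'cV[F]_n, v != 0 & forall i, T i -> a i *m v = 0).
Proof.
(* Rows outside T are zeroed out; a zero row cannot occur in an invertible
   submatrix, so a full-rank selection only picks rows in T. *)
pose B : 'M[F]_(#|I|, n) := \matrix_j (if T (enum_val j) then a (enum_val j) else 0).
have [fullB | notfullB] := boolP (row_full B); [left | right].
  pose f := fullrankfun fullB.
  have unitB := fullrowsub_unit fullB.
  have Tf k : T (enum_val (f k)).
    apply/negPn/negP => nT; move: (unitmx_row_neq0 k unitB).
    by rewrite row_rowsub rowK (negbTE nT) eqxx.
  exists (enum_val \o f); split => //.
  - by move=> k l /enum_val_inj /fullrankfun_inj.
  - suff -> : \matrix_k a (enum_val (f k)) = rowsub f B by [].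
    by apply/row_matrixP => k; rewrite row_rowsub !rowK Tf.
move: notfullB; rewrite -cokermx_eq0 => /matrix0Pn [i [j Bij]].
exists (col j (cokermx B)).
  by apply: contraNneq Bij => /colP /(_ i); rewrite !mxE => ->.
move=> nu Tnu; have rowB : row (enum_rank nu) B = a nu by rewrite rowK enum_rankK Tnu.
by rewrite colE mulmxA -rowB -row_mul mulmx_coker row0 mul0mx.
Qed.

End RowsOrKernel.

Lemma ltr_prod_le_lt (R : numDomainType) (I : finType) (E1 E2 : I -> R) i0 :
  (forall i, 0 < E1 i <= E2 i) -> E1 i0 < E2 i0 ->
  \prod_i E1 i < \prod_i E2 i.
Proof.
move=> E12 lt_i0; rewrite (bigD1 i0) //= [X in _ < X](bigD1 i0) //=.
have /andP [E1i0_gt0 _] := E12 i0.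
have prod_gt0 : 0 < \prod_(i | i != i0) E1 i.
  by apply: prodr_gt0 => i _; case/andP: (E12 i).
apply: (lt_le_trans (y := E2 i0 * \prod_(i | i != i0) E1 i)).
  by rewrite ltr_pM2r.
rewrite ler_pM2l ?(lt_trans E1i0_gt0) //; apply: ler_prod => i _.
by case/andP: (E12 i) => /ltW ->.
Qed.

Section ExpSum.
Variable R : realType.

Lemma expR_addexpRN_gt2 (s : R) : s != 0 -> 2 < expR s + expR (- s).
Proof.
move=> s0; have := expR_gt1Dx s0; have := expR_gt1Dx (x := - s).
by rewrite oppr_eq0 s0 => /(_ isT); lra.
Qed.

Lemma one_addexpR_sq_lt (a s : R) : s != 0 ->
  (1 + expR a) ^+ 2 < (1 + expR (a + s)) * (1 + expR (a - s)).
Proof.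
move=> /expR_addexpRN_gt2 cosh_gt; have ea := expR_gt0 a.
have eNs := expRxMexpNx_1 s.
rewrite expRD expRB -expRN; nra.
Qed.

Lemma f_obj_gt0 (d : nat) (y : 'cV[R]_d) : 0 < f_obj y.
Proof. by apply: prodr_gt0 => i _; rewrite addr_gt0 ?expR_gt0. Qed.

Lemma f_obj_sq_lt (d : nat) (y w : 'cV[R]_d) : w != 0 ->
  f_obj y ^+ 2 < f_obj (y + w) * f_obj (y - w).
Proof.
case/matrix0Pn => i0 [j]; rewrite ord1 => wi0.
rewrite /f_obj -prodrXl -big_split /=.
apply: (ltr_prod_le_lt (i0 := i0)); last by rewrite !mxE one_addexpR_sq_lt.
move=> i; rewrite exprn_gt0 ?addr_gt0 ?expR_gt0 //=.
rewrite !mxE; have [->|wi] := eqVneq (w i 0) 0; last by rewrite ltW ?one_addexpR_sq_lt.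
by rewrite oppr0 !addr0 expr2.
Qed.

End ExpSum.

Section NearZero.
Variable R : realType.

Lemma near0_affine_lt (a b c : R) : c < b -> \forall t \near 0, c + t * a < b.
Proof.
move=> cb.
have lim : c + t * a @[t --> (0 : R)] --> c + 0 * a.
  by apply: cvgD; [exact: cvg_cst | apply: cvgM; [exact: cvg_id | exact: cvg_cst]].
by apply: (cvgr_lt _ lim); rewrite mul0r addr0.
Qed.

Lemma near0_exists_neq0 (Q : R -> Prop) :
  (\forall t \near 0, Q t) -> exists2 t, t != 0 & Q t.
Proof.
move=> /nbhs_dnbhs Qnear.
have [t [t0 Qt]] := filter_ex (filterI (nbhs_dnbhs_neq (0 : R)) Qnear).
by exists t.
Qed.

End NearZero.

Section Polytope.
Variables (R : realType) (d : nat) (P : cube d -> R) (omega : cube d).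

Definition active_row (y : 'cV[R]_d) (nu : cube d) : bool :=
  (nu != omega) && (A_row_y omega nu y == b_ent P omega nu).

Definition A_rowv (nu : cube d) : 'rV[R]_d := \row_i A_ent R omega nu i.

Lemma A_row_y_mulmx nu (y : 'cV[R]_d) : A_row_y omega nu y = (A_rowv nu *m y) 0 0.
Proof. by rewrite mxE; apply: eq_bigr => i _; rewrite mxE. Qed.

Lemma A_row_yDZ nu (y v : 'cV[R]_d) (t : R) :
  A_row_y omega nu (y + t *: v) = A_row_y omega nu y + t * A_row_y omega nu v.
Proof. by rewrite !A_row_y_mulmx mulmxDr -scalemxAr !mxE. Qed.

Lemma Qpoly_perturb (y v : 'cV[R]_d) : Qpoly P omega y ->
  (forall nu, active_row y nu -> A_row_y omega nu v = 0) ->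
  \forall t \near (0 : R), Qpoly P omega (y + t *: v).
Proof.
move=> Qy v_ker.
suff per_row nu : \forall t \near (0 : R),
    nu != omega -> A_row_y omega nu (y + t *: v) <= b_ent P omega nu.
  exact: filter_forall _ per_row.
have [-> | nu_omega] := eqVneq nu omega; first by near=> t.
have [act | inact] := boolP (active_row y nu).
  by near=> t => _; rewrite A_row_yDZ v_ker // mulr0 addr0 Qy.
have slack : A_row_y omega nu y < b_ent P omega nu.
  by rewrite lt_neqAle Qy // andbT; apply: contra inact; rewrite /active_row nu_omega.
near=> t => _; rewrite A_row_yDZ; apply/ltW; near: t.
exact: near0_affine_lt.
Unshelve. all: by end_near.
Qed.

End Polytope.

Theorem theorem1 (R : realType) (d : nat) (P : cube d -> R) :
  (1 <= d)%N -> full_support_prob P ->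
  forall (omega : cube d) (y : 'cV[R]_d),
    Qpoly P omega y ->
    (forall z : 'cV[R]_d, Qpoly P omega z -> f_obj z <= f_obj y) ->
    is_vertex P omega y.
Proof.
move=> _ _ omega y Qy y_max; split => //.
have [[s [s_inj s_act s_unit]] | [v v_neq0 v_ker]] :=
  rows_unitmx_or_kernel (active_row P omega y) (A_rowv R omega).
  exists s; split => // [k | | k]; last by case/andP: (s_act k) => _ /eqP.
    by case/andP: (s_act k).
  by congr (_ \in unitmx): s_unit; apply/matrixP => k i; rewrite !mxE.
have active_ker nu : active_row P omega y nu -> A_row_y omega nu v = 0.
  by move=> /v_ker; rewrite A_row_y_mulmx => ->; rewrite mxE.
have [t t_neq0 [Qplus Qminus]] : exists2 t : R, t != 0 &
    Qpoly P omega (y + t *: v) /\ Qpoly P omega (y - t *: v).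
  apply: near0_exists_neq0; near=> t; split; first by near: t; exact: Qpoly_perturb.
  rewrite -scalerN; near: t; apply: Qpoly_perturb => // nu /active_ker.
  by rewrite !A_row_y_mulmx mulmxN => v0; rewrite [LHS]mxE v0 oppr0.
have tv_neq0 : t *: v != 0 by rewrite scaler_eq0 negb_or t_neq0.
have := f_obj_sq_lt y tv_neq0; rewrite ltNge expr2 => /negP[].
by apply: ler_pM; rewrite ?y_max ?ltW ?f_obj_gt0.
Unshelve. all: by end_near.
Qed.
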